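(* Let $a$ be a strongly regular scale factor (extended evenly to negative arguments) such that either (i) $\dot a(0^+)=0$ and there is $\epsilon>0$ with $\ddot a(t)\ge0$ on $(0,\epsilon)$, or (ii) $\infty>\dot a(0^+)>0$, and such that $\left|\frac{\dddot a(t)a^2(t)}{\dot a^3(t)}\right|\le C$ for all $t>0$ and some constant $C>0$. Consider the two-dimensional extended spacetime with coordinates $(\tau,\rho)$, $\tau>0$, $|\rho|<\rho_{\max}(\tau)$, and metric $ds^2=g_{\tau\tau}(\tau,\rho)\,d\tau^2+d\rho^2$. Then the cosmological-time-zero set $\mathcal M^0=\{(\tau,\pm\rho_{\mathcal M_\tau}):\tau>0\}$ is lightlike: for every $\tau>0$ the tangent vector $u=(1,\pm\frac{d\rho_{\mathcal M_\tau}}{d\tau})$ to $\mathcal M^0$ at $(\tau,\pm\rho_{\mathcal M_\tau})$ satisfies $g(u,u)=g_{\tau\tau}(\tau,\rho_{\mathcal M_\tau})+\left(\frac{d\rho_{\mathcal M_\tau}}{d\tau}\right)^2=0$.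
   Context: A function $a:[0,\infty)\to[0,\infty)$ is a regular scale factor if: (a) $a(0)=0$; (b) $a$ is increasing and continuous on $[0,\infty)$, twice continuously differentiable on $(0,\infty)$, with an inverse function on $[0,\infty)$; (c) $\frac{a(t)\ddot a(t)}{\dot a(t)^2}\le1$ for all $t>0$ (presupposing $\dot a(t)\ne0$). It is strongly regular if also $\frac{a\ddot a}{\dot a^2}\ge-K$ on $(0,\infty)$ for a constant $K\ge1$. $\dot a(0^+)=\lim_{t\to0^+}\dot a(t)$. Extend $a$ by $a(-t)=a(t)$. The original spacetime is the two-dimensional Robertson–Walker spacetime $ds^2=-dt^2+a^2(t)d\chi^2$, $t>0$; $(\tau,\rho)$ are Fermi coordinates of the comoving observer at $\chi=0$ ($\tau$ proper time, $\rho$ proper distance along orthogonal spacelike geodesics). For $\tau>0$, $\rho_{\mathcal M_\tau}=\int_0^\tau\frac{a(t)}{\sqrt{a^2(\tau)-a^2(t)}}dt$. For $\tau>0$ and $|\rho|<2\rho_{\mathcal M_\tau}$, $t_0(\tau,\rho)$ is the unique $t_0\in(-\tau,\tau)$ with $|\rho|=\int_{t_0}^\tau\frac{a(t)}{\sqrt{a^2(\tau)-a^2(t)}}dt$ (the cosmological time of the point; $t_0=0$ iff $|\rho|=\rho_{\mathcal M_\tau}$). For $0\le t_0<\tau$, $f(\tau,t_0)=\int_{t_0}^{\tau}\frac{\ddot a(t)}{\dot a(t)^2}\left(\frac{\sqrt{a^2(\tau)-a^2(t_0)}}{\sqrt{a^2(\tau)-a^2(t)}}-1\right)dt$; for $-\tau<t_0<0$,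 $f(\tau,t_0)=2f(\tau,0)-f(\tau,-t_0)$. Then $g_{\tau\tau}(\tau,\rho)=-[1-\dot a(\tau)f(\tau,t_0(\tau,\rho))]^2$. Finally $\rho_{\max}(\tau)=\inf\{\rho:0<\rho<2\rho_{\mathcal M_\tau},\ g_{\tau\tau}(\tau,\rho)=0\}$ if this set is nonempty, and $\rho_{\max}(\tau)=2\rho_{\mathcal M_\tau}$ otherwise. *)

From Stdlib Require Import Reals ClassicalEpsilon.
From Coquelicot Require Import Coquelicot.
Open Scope R_scope.

Definition da (a : R -> R) : R -> R := Derive a.
Definition dda (a : R -> R) : R -> R := Derive_n a 2.
Definition ddda (a : R -> R) : R -> R := Derive_n a 3.

Definition impint (h : R -> R) (lo hi : R) : R :=
  RInt_gen h (at_right lo) (at_left hi).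

Definition regular_scale_factor (a : R -> R) : Prop :=
  a 0 = 0 /\
  (forall s t, 0 <= s -> s < t -> a s < a t) /\
  (forall t, 0 <= t -> continuous a t) /\
  (forall t, 0 < t ->
     ex_derive a t /\ ex_derive (Derive a) t /\ continuous (Derive_n a 2) t) /\
  (forall t, 0 < t -> da a t <> 0 /\
     a t * dda a t / (da a t) ^ 2 <= 1).

Definition strongly_regular_scale_factor (a : R -> R) : Prop :=
  regular_scale_factor a /\
  exists K, 1 <= K /\ forall t, 0 < t -> - K <= a t * dda a t / (da a t) ^ 2.

Definition rhoM (a : R -> R) (tau : R) : R :=
  impint (fun t => a t / sqrt (a tau ^ 2 - a t ^ 2)) 0 tau.

Definition t0 (a : R -> R) (tau rho : R) : R :=
  epsilon (inhabits 0)
    (fun s => - tau < s < tau /\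
       Rabs rho = impint (fun t => a t / sqrt (a tau ^ 2 - a t ^ 2)) s tau).

Definition fpos (a : R -> R) (tau s : R) : R :=
  impint (fun t => dda a t / (da a t) ^ 2 *
            (sqrt (a tau ^ 2 - a s ^ 2) / sqrt (a tau ^ 2 - a t ^ 2) - 1)) s tau.

Definition ffun (a : R -> R) (tau s : R) : R :=
  if Rle_dec 0 s then fpos a tau s else 2 * fpos a tau 0 - fpos a tau (- s).

Definition gtt (a : R -> R) (tau rho : R) : R :=
  - (1 - da a tau * ffun a tau (t0 a tau rho)) ^ 2.

From Stdlib Require Import Reals Lra ClassicalEpsilon Ranalysis5.
From Coquelicot Require Import Coquelicot.
Open Scope R_scope.

(* Let [H(u)] ([hubble_at u] below) be the Hubble time [a/a'] at the moment when
   the scale factor equals [u].  The substitution [a(t) = a(tau) sin th] turns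
   [rho_{M_tau}] into [int_0^{pi/2} H(a(tau) sin th) dth] and [f(tau, 0)] into a
   similar proper integral.  The bound [a a''/a'^2 <= 1] makes [a/a'] nondecreasing,
   and [a(0) = 0] then forces it to vanish at the big bang; together with
   [a a''/a'^2 >= -K] this dominates every angular integrand by a multiple of
   [H(a(tau) sin th)], so one may differentiate in [a(tau)] under the integral sign.
   Integrating by parts against the primitive [(1 - cos th)/a'(t(th))] gives
   [d rho_{M_tau}/d tau = 1 - a'(tau) f(tau, 0)]; since [t_0(tau, +-rho_{M_tau}) = 0],
   the square of this is [-g_tautau] on [M^0]. *)

(** * Real-analysis preliminaries *)

Lemma ball_R (x e y : R) : ball x e y <-> Rabs (y - x) < e.
Proof. reflexivity. Qed.

Lemma locally_R (x d : R) (P : R -> Prop) :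
  0 < d -> (forall y, Rabs (y - x) < d -> P y) -> locally x P.
Proof. intros hd H; exists (mkposreal d hd); intros y hy; exact (H y hy). Qed.

Lemma continuous_Rplus (f g : R -> R) x :
  continuous f x -> continuous g x -> continuous (fun y => f y + g y) x.
Proof. exact (continuous_plus f g x). Qed.

Lemma continuous_Rminus (f g : R -> R) x :
  continuous f x -> continuous g x -> continuous (fun y => f y - g y) x.
Proof. exact (continuous_minus f g x). Qed.

Lemma continuous_Rmult (f g : R -> R) x :
  continuous f x -> continuous g x -> continuous (fun y => f y * g y) x.
Proof. exact (continuous_mult f g x). Qed.

Lemma continuous_Rdiv (f g : R -> R) x :
  continuous f x -> continuous g x -> g x <> 0 -> continuous (fun y => f y / g y) x.
Proof. intros; apply continuous_Rmult, continuous_Rinv_comp; auto. Qed.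

Lemma continuous_Rpow (f : R -> R) n x :
  continuous f x -> continuous (fun y => f y ^ n) x.
Proof.
  intro H; induction n; simpl; [apply continuous_const | apply continuous_Rmult; auto].
Qed.

Lemma continuous_Rcomp (f g : R -> R) x :
  continuous f x -> continuous g (f x) -> continuous (fun y => g (f y)) x.
Proof. exact (continuous_comp f g x). Qed.

Lemma is_derive_continuity_pt (f : R -> R) x l : is_derive f x l -> continuity_pt f x.
Proof.
  intro H; apply continuity_pt_filterlim, (@ex_derive_continuous R_AbsRing R_NormedModule).
  exists l; exact H.
Qed.

Lemma ex_RInt_continuous_R (f : R -> R) x y :
  (forall z, Rmin x y <= z <= Rmax x y -> continuous f z) -> ex_RInt f x y.
Proof. exact (@ex_RInt_continuous R_CompleteNormedModule f x y). Qed.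

Lemma RInt_correct_R (f : R -> R) x y : ex_RInt f x y -> is_RInt f x y (RInt f x y).
Proof. exact (@RInt_correct R_CompleteNormedModule f x y). Qed.

Lemma is_RInt_unique_R (f : R -> R) x y l : is_RInt f x y l -> RInt f x y = l.
Proof. exact (@is_RInt_unique R_CompleteNormedModule f x y l). Qed.

Lemma RInt_Chasles_R (f : R -> R) x y z :
  ex_RInt f x y -> ex_RInt f y z -> RInt f x y + RInt f y z = RInt f x z.
Proof. exact (@RInt_Chasles R_CompleteNormedModule f x y z). Qed.

Lemma RInt_point_R (f : R -> R) x : RInt f x x = 0.
Proof. apply (@RInt_point R_CompleteNormedModule). Qed.

Lemma is_RInt_gen_unique_R (f : R -> R) s t l :
  is_RInt_gen f (at_right s) (at_left t) l -> RInt_gen f (at_right s) (at_left t) = l.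
Proof.
  apply (@is_RInt_gen_unique R_CompleteNormedModule);
    apply Proper_StrongProper; [apply at_right_proper_filter | apply at_left_proper_filter].
Qed.

Lemma continuous_within {T : UniformSpace} (f : T -> R) x (D : T -> Prop) :
  continuous f x -> filterlim f (within D (locally x)) (locally (f x)).
Proof. apply filterlim_filter_le_1, filter_le_within. Qed.

Lemma continuous_at_left_right (f : R -> R) x :
  filterlim f (at_left x) (locally (f x)) -> filterlim f (at_right x) (locally (f x)) ->
  continuous f x.
Proof.
  intros hl hr. apply filterlim_locally; intro eps.
  destruct (proj1 (filterlim_locally f (f x)) hl eps) as [d1 H1].
  destruct (proj1 (filterlim_locally f (f x)) hr eps) as [d2 H2].
  apply (locally_R x (Rmin d1 d2)); [apply Rmin_glb_lt; apply cond_pos|].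
  intros y hy.
  assert (hy1 : ball x d1 y) by (apply ball_R; eapply Rlt_le_trans; [exact hy | apply Rmin_l]).
  assert (hy2 : ball x d2 y) by (apply ball_R; eapply Rlt_le_trans; [exact hy | apply Rmin_r]).
  destruct (Rtotal_order y x) as [h | [h | h]].
  - exact (H1 y hy1 h).
  - subst; apply ball_center.
  - exact (H2 y hy2 h).
Qed.

Lemma continuous_at_right_unique (f g : R -> R) x :
  continuous f x -> continuous g x -> at_right x (fun y => f y = g y) -> f x = g x.
Proof.
  intros hf hg he.
  assert (lf : filterlim f (at_right x) (locally (f x)))
    by (apply continuous_within, hf).
  assert (lg : filterlim f (at_right x) (locally (g x))).
  { apply (filterlim_ext_loc g); [revert he; apply filter_imp; auto|].
    apply continuous_within, hg. }
  exact (filterlim_locally_unique _ _ _ lf lg).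
Qed.

Lemma filterlim_squeeze_0 {T} (F : (T -> Prop) -> Prop) {FF : Filter F} (f g : T -> R) :
  F (fun x => Rabs (f x) <= g x) -> filterlim g F (locally 0) -> filterlim f F (locally 0).
Proof.
  intros hb hg. apply filterlim_locally; intro eps.
  generalize (filter_and _ _ hb (proj1 (filterlim_locally g 0) hg eps)).
  apply filter_imp; intros x [h1 h2]; apply ball_R in h2; apply ball_R.
  rewrite Rminus_0_r in *. apply Rabs_lt_between' in h2. lra.
Qed.

Lemma continuity_2d_pt_squeeze_0 (f g : R -> R -> R) x y :
  f x y = 0 -> g x y = 0 -> continuity_2d_pt g x y ->
  locally_2d (fun u v => Rabs (f u v) <= g u v) x y -> continuity_2d_pt f x y.
Proof.
  intros hf hg Hg hb eps.
  generalize (locally_2d_and _ _ _ _ hb (Hg eps)).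
  apply locally_2d_impl, locally_2d_forall; intros u v [hbu hgu].
  rewrite hf, Rminus_0_r. rewrite hg, Rminus_0_r in hgu.
  apply Rabs_def2 in hgu. lra.
Qed.

Lemma RInt_primitive_at_right (F P : R -> R) lo x y L : lo < x < y ->
  (forall z, lo < z <= y -> continuous F z) -> (forall z, x < z <= y -> is_derive P z (F z)) ->
  filterlim P (at_right x) (locally L) -> RInt F x y = P y - L.
Proof.
  intros hxy hF hP hL.
  set (E := fun z => RInt F z y).
  assert (hE : filterlim E (at_right x) (locally (E x))).
  { apply continuous_within.
    apply (continuous_RInt_2 F x y E), (locally_R x (Rmin (x - lo) (y - x)));
      [apply Rmin_glb_lt; lra|].
    intros z hz; apply Rabs_lt_between' in hz.
    assert (Rmin (x - lo) (y - x) <= x - lo) by apply Rmin_l.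
    assert (Rmin (x - lo) (y - x) <= y - x) by apply Rmin_r.
    apply RInt_correct_R, ex_RInt_continuous_R; intros w hw; apply hF.
    revert hw; unfold Rmin, Rmax; destruct Rle_dec; lra. }
  assert (hE' : filterlim E (at_right x) (locally (P y - L))).
  { apply (filterlim_ext_loc (fun z => P y - P z)).
    - apply (locally_R x (y - x)); [lra|]; intros z hz hz0; apply Rabs_lt_between' in hz.
      symmetry; apply is_RInt_unique_R, (is_RInt_derive P F);
        rewrite Rmin_left, Rmax_right by lra; intros w hw; [apply hP | apply hF]; lra.
    - apply (filterlim_comp _ _ _ P (fun w => P y - w) _ (locally L) _ hL).
      apply (continuous_Rminus (fun _ => _) (fun w => w));
        [apply continuous_const | apply continuous_id]. }
  exact (filterlim_locally_unique _ _ _ hE hE').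
Qed.

Lemma continuity_2d_pt_mul_sin (g : R -> R) x y :
  continuity_pt g (x * sin y) -> continuity_2d_pt (fun u v => g (u * sin v)) x y.
Proof.
  intro hg; apply (continuity_1d_2d_pt_comp g (fun u v => u * sin v)); [exact hg|].
  apply continuity_2d_pt_mult; [apply continuity_2d_pt_id1|].
  apply (continuity_1d_2d_pt_comp sin (fun u v => v));
    [apply continuity_sin | apply continuity_2d_pt_id2].
Qed.

Lemma is_RInt_gen_antiderivative (f G : R -> R) s t L : s < t ->
  (forall x y, s < x <= y -> y < t -> is_RInt f x y (G y - G x)) ->
  filterlim G (at_right s) (locally (G s)) ->
  filterlim G (at_left t) (locally L) ->
  is_RInt_gen f (at_right s) (at_left t) (L - G s).
Proof.
  intros hst hI h1 h2 P [eps HP].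
  set (m := (s + t) / 2).
  assert (he : 0 < eps / 2) by (destruct eps; simpl; lra).
  assert (A1 := proj1 (filterlim_locally G (G s)) h1 (mkposreal _ he)).
  assert (A2 := proj1 (filterlim_locally G L) h2 (mkposreal _ he)).
  assert (B1 : at_right s (fun x => x < m)).
  { apply (locally_R s (m - s)); [unfold m; lra|].
    intros y hy _; apply Rabs_lt_between' in hy; lra. }
  assert (B2 : at_left t (fun x => m < x)).
  { apply (locally_R t (t - m)); [unfold m; lra|].
    intros y hy _; apply Rabs_lt_between' in hy; lra. }
  assert (C1 : at_right s (fun x => s < x)) by (apply (locally_R s 1); [lra | auto]).
  assert (C2 : at_left t (fun x => x < t)) by (apply (locally_R t 1); [lra | auto]).
  apply Filter_prod with
    (fun x => ball (G s) (eps / 2) (G x) /\ x < m /\ s < x)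
    (fun y => ball L (eps / 2) (G y) /\ m < y /\ y < t);
    [repeat apply filter_and; auto | repeat apply filter_and; auto |].
  intros x y [hx1 [hx2 hx3]] [hy1 [hy2 hy3]].
  exists (G y - G x); split; [apply hI; unfold m in *; lra|].
  apply HP, ball_R. apply ball_R, Rabs_lt_between' in hx1. apply ball_R, Rabs_lt_between' in hy1.
  apply Rabs_lt_between'; simpl in *; lra.
Qed.

Lemma ex_RInt_continuous_on (f : R -> R) lo hi x y :
  (forall z, lo < z < hi -> continuous f z) -> lo < x < hi -> lo < y < hi -> ex_RInt f x y.
Proof.
  intros hf hx hy; apply ex_RInt_continuous_R; intros z hz; apply hf.
  revert hz; unfold Rmin, Rmax; destruct Rle_dec; lra.
Qed.

Lemma continuous_0_glue (f g h : R -> R) :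
  continuous g 0 -> continuous h 0 -> f 0 = g 0 -> f 0 = 0 -> h 0 = 0 ->
  at_left 0 (fun x => f x = g x) -> at_right 0 (fun x => Rabs (f x) <= h x) ->
  continuous f 0.
Proof.
  intros hg hh fg f0 h0 hl hr. apply continuous_at_left_right.
  - rewrite fg. apply (filterlim_ext_loc g); [revert hl; apply filter_imp; auto|].
    apply continuous_within, hg.
  - assert (hh0 : filterlim h (at_right 0) (locally (h 0))).
    { apply continuous_within, hh. }
    rewrite f0; rewrite h0 in hh0; exact (filterlim_squeeze_0 _ f h hr hh0).
Qed.

Lemma continuous_even (f : R -> R) :
  (forall t, f (- t) = f t) -> (forall t, 0 <= t -> continuous f t) -> forall t, continuous f t.
Proof.
  intros hev hc t. destruct (Rle_lt_dec 0 t) as [h | h]; [auto|].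
  apply (continuous_ext (fun s => f (- s))); [auto|].
  apply continuous_Rcomp; [apply (continuous_opp (fun s : R => s)), continuous_id|].
  apply hc; lra.
Qed.

Lemma is_derive_increasing_ge0 (f : R -> R) t l :
  (forall s u, 0 <= s -> s < u -> f s < f u) -> 0 < t -> is_derive f t l -> 0 <= l.
Proof.
  intros hinc ht H. apply is_derive_Reals in H.
  destruct (Rle_lt_dec 0 l) as [h | h]; auto; exfalso.
  destruct (H (- l / 2) ltac:(lra)) as [d hd].
  assert (hdp := cond_pos d).
  assert (h1 := hd (d / 2) ltac:(lra) ltac:(rewrite Rabs_pos_eq; lra)).
  assert (h2 : f t < f (t + d / 2)) by (apply hinc; lra).
  apply Rabs_lt_between' in h1.
  assert (0 < (f (t + d / 2) - f t) / (d / 2)) by (apply Rdiv_lt_0_compat; lra).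
  lra.
Qed.

Lemma sqrt_sq_sub_sq_sin A th : 0 < A -> 0 <= cos th ->
  sqrt (A ^ 2 - (A * sin th) ^ 2) = A * cos th.
Proof.
  intros hA hc. replace (A ^ 2 - (A * sin th) ^ 2) with ((A * cos th) ^ 2).
  - apply sqrt_pow2, Rmult_le_pos; lra.
  - assert (h := sin2_cos2 th); unfold Rsqr in h; simpl; nra.
Qed.

Lemma one_sub_cos_le_sin_sq th : 0 <= cos th -> 0 <= 1 - cos th <= sin th ^ 2.
Proof.
  intro hc. assert (h := sin2_cos2 th); unfold Rsqr in h.
  assert (cos th <= 1) by apply COS_bound. simpl; nra.
Qed.

Lemma mul_sin_range b u v : 0 < u < b -> 0 < sin v -> 0 < u * sin v < b.
Proof.
  intros hu hs; assert (sin v <= 1) by apply SIN_bound; split; [apply Rmult_lt_0_compat; lra|].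
  assert (u * sin v <= u) by (rewrite <- (Rmult_1_r u) at 2; apply Rmult_le_compat_l; lra); lra.
Qed.

Lemma mul_sin_le A v : 0 <= A -> A * sin v <= A.
Proof.
  intro hA; assert (sin v <= 1) by apply SIN_bound.
  rewrite <- (Rmult_1_r A) at 2; apply Rmult_le_compat_l; lra.
Qed.

Lemma continuous_asin_ge1 y : 1 <= y -> continuous asin y.
Proof.
  intro hy; assert (hpi := PI2_1); apply filterlim_locally; intro eps.
  set (e := Rmin eps (PI / 2)).
  assert (he : 0 < e <= PI / 2)
    by (unfold e; split; [apply Rmin_glb_lt; [apply cond_pos | lra] | apply Rmin_r]).
  assert (e <= eps) by apply Rmin_l.
  assert (hs : sin (PI / 2 - e) < 1) by (rewrite <- sin_PI2; apply sin_increasing_1; lra).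
  assert (0 <= sin (PI / 2 - e)) by (apply sin_ge_0; lra).
  apply (locally_R y (1 - sin (PI / 2 - e))); [lra|]; intros w hw; apply ball_R.
  apply Rabs_lt_between' in hw.
  assert (hy1 : asin y = PI / 2) by (unfold asin; repeat destruct Rle_dec; lra).
  rewrite hy1; destruct (Rle_lt_dec 1 w) as [h1 | h1].
  - assert (hw1 : asin w = PI / 2) by (unfold asin; repeat destruct Rle_dec; lra).
    rewrite hw1; unfold Rminus; rewrite Rplus_opp_r, Rabs_R0; apply cond_pos.
  - assert (hb := asin_bound w).
    assert (PI / 2 - e < asin w) by (apply sin_increasing_0; try lra; rewrite sin_asin; lra).
    rewrite Rabs_left1; lra.
Qed.

Lemma continuous_asin y : continuous asin y.
Proof.
  assert (hpi := PI2_1).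
  destruct (Rlt_le_dec y 1) as [h1 | h1]; [|apply continuous_asin_ge1, h1].
  destruct (Rle_lt_dec y (-1)) as [h2 | h2].
  - apply (continuous_ext (fun z => - asin (- z)));
      [intro z; rewrite asin_opp, Ropp_involutive; reflexivity|].
    apply (continuous_opp (fun z => asin (- z))), continuous_Rcomp;
      [apply (continuous_opp (fun s : R => s)), continuous_id | apply continuous_asin_ge1; lra].
  - apply continuity_pt_filterlim.
    apply (continuity_pt_recip_interv sin asin (- (PI / 2)) (PI / 2)); try lra.
    + intros; apply sin_increasing_1; lra.
    + rewrite sin_neg, sin_PI2; intros; unfold comp, id; apply sin_asin; lra.
    + intros; apply asin_bound.
    + intros; apply continuity_sin.
    + rewrite sin_neg, sin_PI2; lra.
Qed.

Lemma locally_sin_neg th : sin th < 0 -> locally th (fun t => sin t < 0).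
Proof.
  intro h; generalize (proj1 (filterlim_locally sin (sin th)) (continuous_sin th)
    (mkposreal (- sin th) ltac:(lra))).
  apply filter_imp; intros t ht; apply ball_R, Rabs_lt_between' in ht; simpl in ht; lra.
Qed.

(** * The inverse of the scale factor and the Hubble time *)

Section ScaleFactor.

Variable a : R -> R.
Hypothesis a_0 : a 0 = 0.
Hypothesis a_even : forall t, a (- t) = a t.
Hypothesis a_incr : forall s t, 0 <= s -> s < t -> a s < a t.
Hypothesis a_cont : forall t, continuous a t.
Hypothesis a_derivable : forall t, 0 < t -> ex_derive a t.
Hypothesis da_derivable : forall t, 0 < t -> ex_derive (Derive a) t.
Hypothesis dda_cont : forall t, 0 < t -> continuous (Derive_n a 2) t.
Hypothesis da_pos : forall t, 0 < t -> 0 < Derive a t.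
Variable K : R.
Hypothesis K_ge1 : 1 <= K.
Hypothesis accel_bounds :
  forall t, 0 < t -> - K <= a t * Derive_n a 2 t / Derive a t ^ 2 <= 1.

Lemma a_lt_Rabs s t : Rabs s < Rabs t -> a s < a t.
Proof.
  assert (habs : forall x, a x = a (Rabs x)).
  { intro x; destruct (Rle_lt_dec 0 x).
    - rewrite Rabs_pos_eq; auto.
    - rewrite Rabs_left, a_even; auto. }
  intro h; rewrite (habs s), (habs t); apply a_incr; [apply Rabs_pos | exact h].
Qed.

Lemma a_pos t : t <> 0 -> 0 < a t.
Proof.
  intro h; rewrite <- a_0; apply a_lt_Rabs; rewrite Rabs_R0; apply Rabs_pos_lt, h.
Qed.

Lemma a_ge0 t : 0 <= a t.
Proof. destruct (Req_dec t 0) as [-> | h]; [lra | left; apply a_pos, h]. Qed.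

Lemma a_le s t : 0 <= s <= t -> a s <= a t.
Proof. intros [hs [h | ->]]; [left; apply a_incr | right]; auto. Qed.

Lemma a_lt_reg s t : 0 <= t -> a s < a t -> s < t.
Proof.
  intros ht h; destruct (Rlt_le_dec s t) as [| hts]; auto.
  assert (a t <= a s) by (apply a_le; lra); lra.
Qed.

Lemma a_le_reg s t : 0 <= t -> a s <= a t -> s <= t.
Proof.
  intros ht h; destruct (Rle_lt_dec s t) as [| hts]; auto.
  assert (a t < a s) by (apply a_incr; lra); lra.
Qed.

(* The inverse of [a] on [[0, +oo)], extended by [0] to [u <= 0]; it is junk
   beyond the range of [a], hence the bounds [u <= a M] below. *)
Definition ainv (u : R) : R :=
  epsilon (inhabits 0) (fun t => 0 <= t /\ a t = Rmax 0 u).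

Lemma ainv_spec M u : 0 <= M -> u <= a M -> 0 <= ainv u /\ a (ainv u) = Rmax 0 u.
Proof.
  intros hM hu; apply (epsilon_spec (inhabits 0) (fun t => 0 <= t /\ a t = Rmax 0 u)).
  assert (h0 := a_ge0 M).
  destruct (IVT_gen a 0 M (Rmax 0 u)) as [x [hx1 hx2]].
  - intro t; apply continuity_pt_filterlim, a_cont.
  - rewrite a_0, (Rmin_left 0 (a M)), (Rmax_right 0 (a M)) by lra.
    split; [apply Rmax_l | apply Rmax_lub; lra].
  - rewrite (Rmin_left 0 M), (Rmax_right 0 M) in hx1 by lra; exists x; split; [lra | exact hx2].
Qed.

Lemma ainv_nonpos u : u <= 0 -> ainv u = 0.
Proof.
  intro h; destruct (ainv_spec 0 u (Rle_refl 0)) as [h1 h2]; [rewrite a_0; exact h|].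
  rewrite Rmax_left, <- a_0 in h2 by lra.
  apply Rle_antisym; [apply a_le_reg | ]; lra.
Qed.

Lemma a_ainv M u : 0 <= M -> 0 <= u <= a M -> a (ainv u) = u.
Proof. intros hM hu; rewrite (proj2 (ainv_spec M u hM (proj2 hu))), Rmax_right; lra. Qed.

Lemma ainv_ge0 M u : 0 <= M -> u <= a M -> 0 <= ainv u.
Proof. intros hM hu; apply (ainv_spec M u hM hu). Qed.

Lemma ainv_a t : 0 <= t -> ainv (a t) = t.
Proof.
  intro ht; assert (h := a_ainv t (a t) ht (conj (a_ge0 t) (Rle_refl _))).
  assert (0 <= ainv (a t)) by (apply (ainv_ge0 t); lra).
  apply Rle_antisym; apply a_le_reg; lra.
Qed.

Lemma ainv_le M u v : 0 <= M -> u <= v <= a M -> ainv u <= ainv v.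
Proof.
  intros hM [huv hv]; destruct (Rle_lt_dec u 0) as [hu | hu].
  - rewrite ainv_nonpos by exact hu; exact (ainv_ge0 M v hM hv).
  - apply a_le_reg; [exact (ainv_ge0 M v hM hv)|].
    rewrite (a_ainv M u), (a_ainv M v); lra.
Qed.

Lemma ainv_lt M u v : 0 <= M -> 0 <= u < v -> v <= a M -> ainv u < ainv v.
Proof.
  intros hM hu hv; apply a_lt_reg; [exact (ainv_ge0 M v hM hv)|].
  rewrite (a_ainv M u), (a_ainv M v); lra.
Qed.

Lemma ainv_pos M u : 0 <= M -> 0 < u <= a M -> 0 < ainv u.
Proof. intros hM hu; rewrite <- (ainv_nonpos 0) by lra; apply (ainv_lt M); lra. Qed.

Lemma ainv_lt_a t u : 0 < t -> u < a t -> ainv u < t.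
Proof.
  intros ht hu; destruct (Rle_lt_dec u 0) as [h | h]; [rewrite ainv_nonpos; lra|].
  apply a_lt_reg; [lra|]; rewrite (a_ainv t u); lra.
Qed.

Lemma ainv_continuous M u : 0 <= M -> 0 < u < a M -> continuous ainv u.
Proof.
  intros hM hu. assert (hM' : 0 < M) by (apply (a_lt_reg 0); rewrite ?a_0; lra).
  apply continuity_pt_filterlim.
  apply (continuity_pt_recip_interv a ainv 0 M hM'); rewrite ?a_0; try lra.
  - intros x y hx hxy _; apply a_incr; lra.
  - intros x hx hxM; unfold comp, id; apply (a_ainv M); lra.
  - intros x hx hxM; split; [apply (ainv_ge0 M) | rewrite <- (ainv_a M) by lra; apply (ainv_le M)];
      lra.
  - intros; apply continuity_pt_filterlim, a_cont.
Qed.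

Lemma is_derive_ainv M u : 0 <= M -> 0 < u < a M -> is_derive ainv u (/ Derive a (ainv u)).
Proof.
  intros hM hu. set (lb := u / 2); set (ub := (u + a M) / 2).
  assert (hlb : 0 < ainv lb) by (apply (ainv_pos M); unfold lb; lra).
  assert (Prf : forall y, ainv lb <= y <= ainv ub -> derivable_pt a y).
  { intros y hy; apply ex_derive_Reals_0, a_derivable; lra. }
  assert (Prg_incr : ainv lb <= ainv u <= ainv ub).
  { split; left; apply (ainv_lt M); unfold lb, ub; lra. }
  apply is_derive_Reals.
  assert (H := derivable_pt_lim_recip_interv a ainv lb ub u Prf
    (proj2 (continuity_pt_filterlim _ _) (ainv_continuous M u hM hu)) ltac:(unfold lb, ub; lra)
    ltac:(unfold lb, ub; lra) Prg_incr).
  rewrite Derive_Reals in H; unfold Rdiv in H; rewrite Rmult_1_l in H; apply H.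
  - intros x hx; unfold comp, id; apply (a_ainv M); unfold lb, ub in *; lra.
  - apply Rgt_not_eq, da_pos; lra.
Qed.

Lemma continuous_da t : 0 < t -> continuous (Derive a) t.
Proof. intro ht; apply (@ex_derive_continuous R_AbsRing R_NormedModule), da_derivable, ht. Qed.

Definition hubble_time t := a t / Derive a t.
Definition accel_ratio t := a t * Derive_n a 2 t / Derive a t ^ 2.

Lemma is_derive_hubble_time t : 0 < t -> is_derive hubble_time t (1 - accel_ratio t).
Proof.
  intro ht; unfold hubble_time, accel_ratio.
  assert (h1 := a_derivable t ht); assert (h2 := da_derivable t ht); assert (h3 := da_pos t ht).
  auto_derive; [repeat split; auto; lra|]; simpl.
  change (fun x => a x) with a; change (fun x => Derive a x) with (Derive a).
  field; lra.
Qed.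

Lemma hubble_time_pos t : 0 < t -> 0 < hubble_time t.
Proof. intro ht; apply Rdiv_lt_0_compat; [apply a_pos | apply da_pos]; lra. Qed.

Lemma continuous_hubble_time t : 0 < t -> continuous hubble_time t.
Proof.
  intro ht; apply continuous_Rdiv; [apply a_cont | apply continuous_da; exact ht |].
  apply Rgt_not_eq, da_pos, ht.
Qed.

Lemma continuous_accel_ratio t : 0 < t -> continuous accel_ratio t.
Proof.
  intro ht; apply continuous_Rdiv;
    [apply continuous_Rmult; [apply a_cont | apply dda_cont, ht]|..].
  - apply continuous_Rpow, continuous_da, ht.
  - apply pow_nonzero, Rgt_not_eq, da_pos, ht.
Qed.

(* The upper bound [a a''/a'^2 <= 1] of a regular scale factor says exactly
   that the Hubble time [a/a'] is nondecreasing. *)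
Lemma hubble_time_le s t : 0 < s <= t -> hubble_time s <= hubble_time t.
Proof.
  intros hst.
  destruct (MVT_gen hubble_time s t (fun x => 1 - accel_ratio x)) as [c [hc1 hc2]].
  - intros x hx; rewrite Rmin_left, Rmax_right in hx by lra; apply is_derive_hubble_time; lra.
  - intros x hx; rewrite Rmin_left, Rmax_right in hx by lra.
    apply (is_derive_continuity_pt _ _ _ (is_derive_hubble_time x ltac:(lra))).
  - rewrite Rmin_left, Rmax_right in hc1 by lra.
    assert (accel_ratio c <= 1) by (apply accel_bounds; lra).
    assert (0 <= (1 - accel_ratio c) * (t - s)) by (apply Rmult_le_pos; lra); lra.
Qed.

Lemma ln_a_lower_bound eps : 0 < eps -> (forall t, 0 < t -> eps <= hubble_time t) ->
  forall t, 0 < t <= 1 -> ln (a 1) - 1 / eps <= ln (a t).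
Proof.
  intros he hq t ht.
  set (phi := fun s => ln (a s) - s / eps).
  assert (hphi : forall s, 0 < s -> is_derive phi s (Derive a s / a s - 1 / eps)).
  { intros s hs; unfold phi.
    assert (h1 := a_derivable s hs); assert (h2 := a_pos s ltac:(lra)).
    auto_derive; [repeat split; auto|]. change (fun x => a x) with a; field; lra. }
  destruct (MVT_gen phi t 1 (fun s => Derive a s / a s - 1 / eps)) as [c [hc1 hc2]].
  - intros x hx; rewrite Rmin_left, Rmax_right in hx by lra; apply hphi; lra.
  - intros x hx; rewrite Rmin_left, Rmax_right in hx by lra.
    apply (is_derive_continuity_pt _ _ _ (hphi x ltac:(lra))).
  - rewrite Rmin_left, Rmax_right in hc1 by lra.
    assert (hc : eps <= hubble_time c) by (apply hq; lra).
    assert (hac : 0 < a c) by (apply a_pos; lra).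
    assert (hdc : 0 < Derive a c) by (apply da_pos; lra).
    assert (Derive a c / a c <= 1 / eps).
    { unfold hubble_time in hc. apply Rmult_le_reg_r with (a c / Derive a c * eps).
      - apply Rmult_lt_0_compat; [apply Rdiv_lt_0_compat|]; lra.
      - replace (Derive a c / a c * (a c / Derive a c * eps)) with eps by (field; lra).
        replace (1 / eps * (a c / Derive a c * eps)) with (a c / Derive a c) by (field; lra).
        exact hc. }
    assert ((Derive a c / a c - 1 / eps) * (1 - t) <= 0) by (apply Rmult_le_0_r; lra).
    unfold phi in hc2. assert (0 <= t / eps) by (apply Rdiv_le_0_compat; lra). lra.
Qed.

(* Otherwise [ln a] would stay bounded below near [0], contradicting [a(0) = 0]. *)
Lemma hubble_time_small eps : 0 < eps ->
  exists d, 0 < d /\ forall t, 0 < t < d -> hubble_time t < eps.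
Proof.
  intro he. destruct (classic (exists t1, 0 < t1 /\ hubble_time t1 < eps)) as [[t1 [h1 h2]] | hn].
  - exists t1; split; [exact h1|]; intros t ht.
    apply (Rle_lt_trans _ (hubble_time t1)); [apply hubble_time_le; lra | exact h2].
  - exfalso.
    assert (hq : forall t, 0 < t -> eps <= hubble_time t).
    { intros t ht; apply Rnot_lt_le; intro h; apply hn; exists t; auto. }
    set (m := exp (ln (a 1) - 1 / eps)).
    assert (hm : 0 < m) by apply exp_pos.
    destruct (proj1 (filterlim_locally a (a 0)) (a_cont 0) (mkposreal m hm)) as [d hd].
    set (t := Rmin (d / 2) 1).
    assert (ht : 0 < t <= 1).
    { unfold t; split; [apply Rmin_glb_lt; [destruct d; simpl; lra | lra] | apply Rmin_r]. }
    assert (hat : a t < m).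
    { assert (h := hd t); rewrite a_0 in h.
      assert (hb : ball 0 m (a t)) by (apply h, ball_R; rewrite Rminus_0_r, Rabs_pos_eq by lra;
        apply (Rle_lt_trans _ (d / 2)); [apply Rmin_l | destruct d; simpl; lra]).
      apply ball_R, Rabs_lt_between' in hb; lra. }
    assert (hl := ln_a_lower_bound eps he hq t ht).
    assert (m <= a t).
    { unfold m; rewrite <- (exp_ln (a t)) by (apply a_pos; lra).
      destruct hl as [hl | hl];
        [left; apply exp_increasing, hl | right; rewrite hl; reflexivity]. }
    lra.
Qed.

Definition hubble_at u := hubble_time (ainv u).

Lemma hubble_at_nonpos u : u <= 0 -> hubble_at u = 0.
Proof. intro h; unfold hubble_at, hubble_time; rewrite ainv_nonpos, a_0 by exact h; lra. Qed.

Lemma hubble_at_eq M u : 0 <= M -> 0 < u <= a M -> hubble_at u = u / Derive a (ainv u).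
Proof. intros hM hu; unfold hubble_at, hubble_time; rewrite (a_ainv M); lra. Qed.

Lemma hubble_at_ge0 M u : 0 <= M -> u <= a M -> 0 <= hubble_at u.
Proof.
  intros hM hu; destruct (Rle_lt_dec u 0) as [h | h]; [rewrite hubble_at_nonpos; lra|].
  left; apply hubble_time_pos, (ainv_pos M); lra.
Qed.

Lemma continuous_hubble_at M u : 0 <= M -> u < a M -> continuous hubble_at u.
Proof.
  intros hM hu. destruct (Rtotal_order u 0) as [h | [-> | h]].
  - apply (continuous_ext_loc _ (fun _ => 0)); [|apply continuous_const].
    apply (locally_R u (- u)); [lra|]; intros y hy; apply Rabs_lt_between' in hy.
    rewrite hubble_at_nonpos; lra.
  - apply filterlim_locally; intro eps.
    destruct (hubble_time_small eps (cond_pos eps)) as [d [hd H]].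
    apply (locally_R 0 (a (d / 2))); [apply a_pos; lra|]; intros y hy; apply ball_R.
    rewrite (hubble_at_nonpos 0), !Rminus_0_r by lra; rewrite Rminus_0_r in hy.
    destruct (Rle_lt_dec y 0) as [hy0 | hy0]; [rewrite hubble_at_nonpos, Rabs_R0 by exact hy0;
      apply cond_pos|].
    apply Rabs_def2 in hy.
    assert (hpos : 0 < ainv y) by (apply (ainv_pos (d / 2)); lra).
    assert (ainv y < d / 2) by (apply ainv_lt_a; lra).
    unfold hubble_at; rewrite Rabs_pos_eq by (left; apply hubble_time_pos, hpos).
    apply H; lra.
  - apply (continuous_Rcomp ainv hubble_time); [apply (ainv_continuous M); lra|].
    apply continuous_hubble_time, (ainv_pos M); lra.
Qed.

Definition dhubble_at u := (1 - accel_ratio (ainv u)) / Derive a (ainv u).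
(* [curv_at u = - d/du (1 / a'(ainv u))] *)
Definition curv_at u := Derive_n a 2 (ainv u) / Derive a (ainv u) ^ 3.

Lemma dhubble_at_nonpos u : u <= 0 -> dhubble_at u = dhubble_at 0.
Proof. intro h; unfold dhubble_at; rewrite !ainv_nonpos by lra; reflexivity. Qed.

Lemma curv_at_nonpos u : u <= 0 -> curv_at u = curv_at 0.
Proof. intro h; unfold curv_at; rewrite !ainv_nonpos by lra; reflexivity. Qed.

Lemma is_derive_hubble_at M u : 0 <= M -> 0 < u < a M -> is_derive hubble_at u (dhubble_at u).
Proof.
  intros hM hu; unfold hubble_at, dhubble_at.
  assert (hb : 0 < ainv u) by (apply (ainv_pos M); lra).
  assert (H := is_derive_comp hubble_time ainv u _ _
    (is_derive_hubble_time (ainv u) hb) (is_derive_ainv M u hM hu)).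
  apply (is_derive_ext _ _ _ _ (fun _ => eq_refl)) in H.
  replace ((1 - accel_ratio (ainv u)) / Derive a (ainv u))
    with (scal (/ Derive a (ainv u)) (1 - accel_ratio (ainv u))); [exact H|].
  unfold scal; simpl; unfold mult; simpl; unfold Rdiv; ring.
Qed.

Lemma continuous_dhubble_at M u : 0 <= M -> 0 < u < a M -> continuous dhubble_at u.
Proof.
  intros hM hu; assert (hb : 0 < ainv u) by (apply (ainv_pos M); lra).
  assert (hc := ainv_continuous M u hM hu).
  apply continuous_Rdiv; [apply continuous_Rminus; [apply continuous_const|] | | ].
  - apply (continuous_Rcomp ainv accel_ratio); [exact hc | apply continuous_accel_ratio, hb].
  - apply (continuous_Rcomp ainv (Derive a)); [exact hc | apply continuous_da, hb].
  - apply Rgt_not_eq, da_pos, hb.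
Qed.

Lemma continuous_curv_at M u : 0 <= M -> 0 < u < a M -> continuous curv_at u.
Proof.
  intros hM hu; assert (hb : 0 < ainv u) by (apply (ainv_pos M); lra).
  assert (hc := ainv_continuous M u hM hu).
  apply continuous_Rdiv.
  - apply (continuous_Rcomp ainv (Derive_n a 2)); [exact hc | apply dda_cont, hb].
  - apply continuous_Rpow, (continuous_Rcomp ainv (Derive a));
      [exact hc | apply continuous_da, hb].
  - apply pow_nonzero, Rgt_not_eq, da_pos, hb.
Qed.

Lemma dhubble_at_bounds M u : 0 <= M -> 0 < u <= a M ->
  0 <= u * dhubble_at u <= (1 + K) * hubble_at u.
Proof.
  intros hM hu; assert (hb : 0 < ainv u) by (apply (ainv_pos M); lra).
  assert (hr := accel_bounds (ainv u) hb); fold (accel_ratio (ainv u)) in hr.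
  assert (hq := hubble_time_pos (ainv u) hb).
  replace (u * dhubble_at u) with ((1 - accel_ratio (ainv u)) * hubble_at u).
  - unfold hubble_at; split; [apply Rmult_le_pos | apply Rmult_le_compat_r]; lra.
  - assert (hd := da_pos (ainv u) hb); rewrite (hubble_at_eq M) by lra.
    unfold dhubble_at; field; lra.
Qed.

Lemma curv_at_bound M u : 0 <= M -> 0 < u <= a M -> Rabs (u * u * curv_at u) <= K * hubble_at u.
Proof.
  intros hM hu; assert (hb : 0 < ainv u) by (apply (ainv_pos M); lra).
  assert (hr := accel_bounds (ainv u) hb); fold (accel_ratio (ainv u)) in hr.
  assert (hq := hubble_time_pos (ainv u) hb).
  replace (u * u * curv_at u) with (accel_ratio (ainv u) * hubble_at u).
  - unfold hubble_at; rewrite Rabs_mult, (Rabs_pos_eq (hubble_time _)) by lra.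
    apply Rmult_le_compat_r; [lra | apply Rabs_le; lra].
  - assert (hd := da_pos (ainv u) hb).
    unfold hubble_at, hubble_time, accel_ratio, curv_at; rewrite (a_ainv M) by lra; field; lra.
Qed.

(** * Differentiating [rho] in the scale factor *)

Definition hubble_sin A th := hubble_at (A * sin th).
Definition dhubble_sin A th := sin th * dhubble_at (A * sin th).
Definition rho_scale A := RInt (hubble_sin A) 0 (PI / 2).

Lemma continuous_hubble_sin M A th : 0 <= M -> 0 <= A < a M -> continuous (hubble_sin A) th.
Proof.
  intros hM hA; apply (continuous_Rcomp (fun t => A * sin t) hubble_at).
  - apply continuous_Rmult; [apply continuous_const | apply continuous_sin].
  - apply (continuous_hubble_at M); [exact hM|]; assert (h := mul_sin_le A th); lra.
Qed.

Lemma is_derive_hubble_sin M u v : 0 <= M -> 0 < u < a M -> 0 < sin v ->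
  is_derive (fun z => hubble_sin z v) u (dhubble_sin u v).
Proof.
  intros hM hu hs; unfold hubble_sin, dhubble_sin.
  assert (H := is_derive_comp hubble_at (fun z => z * sin v) u _ (sin v)
    (is_derive_hubble_at M (u * sin v) hM (mul_sin_range (a M) u v hu hs))).
  apply H; auto_derive; auto; ring.
Qed.

Lemma is_derive_hubble_sin_nonpos u v : 0 < u -> sin v <= 0 ->
  is_derive (fun z => hubble_sin z v) u 0.
Proof.
  intros hu hs; apply (is_derive_ext_loc (fun _ => 0)); [|apply (is_derive_const 0)].
  apply (locally_R u u); [exact hu|]; intros y hy; apply Rabs_lt_between' in hy.
  unfold hubble_sin; rewrite hubble_at_nonpos; [reflexivity|].
  assert (0 <= y * - sin v) by (apply Rmult_le_pos; lra); lra.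
Qed.

Lemma dhubble_sin_bound M A th : 0 <= M -> 0 < A < a M -> 0 < sin th ->
  Rabs (dhubble_sin A th) <= (1 + K) / A * hubble_sin A th.
Proof.
  intros hM hA hs; assert (hr := mul_sin_range (a M) A th hA hs).
  destruct (dhubble_at_bounds M (A * sin th) hM ltac:(lra)) as [h1 h2].
  replace (dhubble_sin A th) with (A * sin th * dhubble_at (A * sin th) / A)
    by (unfold dhubble_sin; field; lra).
  rewrite Rabs_pos_eq by (apply Rdiv_le_0_compat; lra).
  apply (Rmult_le_reg_l A); [lra|].
  replace (A * (A * sin th * dhubble_at (A * sin th) / A))
    with (A * sin th * dhubble_at (A * sin th)) by (field; lra).
  replace (A * ((1 + K) / A * hubble_sin A th)) with ((1 + K) * hubble_at (A * sin th))
    by (unfold hubble_sin; field; lra).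
  exact h2.
Qed.

Lemma hubble_sin_ge0 M u v : 0 <= M -> 0 <= u <= a M -> 0 <= hubble_sin u v.
Proof.
  intros hM hu; apply (hubble_at_ge0 M); [exact hM|].
  assert (h := mul_sin_le u v); lra.
Qed.

Lemma Derive_hubble_sin_bound M u v : 0 <= M -> 0 < u < a M -> - PI <= v < PI ->
  Rabs (Derive (fun z => hubble_sin z v) u) <= (1 + K) / u * hubble_sin u v.
Proof.
  intros hM hu hv.
  assert (hg := hubble_sin_ge0 M u v hM ltac:(lra)).
  destruct (Rle_lt_dec v 0) as [hv0 | hv0].
  - rewrite (is_derive_unique _ _ 0), Rabs_R0.
    + apply Rmult_le_pos; [apply Rdiv_le_0_compat|]; lra.
    + apply is_derive_hubble_sin_nonpos; [lra|].
      rewrite <- (Ropp_involutive v), sin_neg.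
      assert (0 <= sin (- v)) by (apply sin_ge_0; lra); lra.
  - assert (hs : 0 < sin v) by (apply sin_gt_0; lra).
    rewrite (is_derive_unique _ _ (dhubble_sin u v))
      by exact (is_derive_hubble_sin M u v hM hu hs).
    apply (dhubble_sin_bound M u v hM hu hs).
Qed.

(* Near the big bang [dhubble_at] may blow up, but [dhubble_sin] is dominated
   by the vanishing [hubble_sin]. *)
Lemma continuity_2d_Derive_hubble_sin M A t : 0 <= M -> 0 < A < a M -> 0 <= t <= PI / 2 ->
  continuity_2d_pt (fun u v => Derive (fun z => hubble_sin z v) u) A t.
Proof.
  intros hM hA ht; assert (hpi := PI2_1).
  assert (hnear : forall d, 0 < d -> d <= A -> d <= a M - A ->
    forall u, Rabs (u - A) < d -> 0 < u < a M)
    by (intros d hd hd1 hd2 u hu; apply Rabs_lt_between' in hu; lra).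
  destruct (Req_dec t 0) as [-> | ht0].
  - apply (continuity_2d_pt_squeeze_0 _ (fun u v => (1 + K) / u * hubble_sin u v)).
    + apply is_derive_unique, is_derive_hubble_sin_nonpos; rewrite ?sin_0; lra.
    + unfold hubble_sin; rewrite sin_0, Rmult_0_r, hubble_at_nonpos; lra.
    + apply continuity_2d_pt_mult.
      * apply (continuity_1d_2d_pt_comp (fun u => (1 + K) / u) (fun u v => u));
          [|apply continuity_2d_pt_id1].
        apply continuity_pt_filterlim, continuous_Rdiv;
          [apply continuous_const | apply continuous_id | lra].
      * apply continuity_2d_pt_mul_sin, continuity_pt_filterlim, (continuous_hubble_at M);
          [exact hM|]; rewrite sin_0, Rmult_0_r; lra.
    + set (d := Rmin (PI / 2) (Rmin A (a M - A))).
      assert (hd : 0 < d) by (unfold d; repeat apply Rmin_glb_lt; lra).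
      assert (d <= PI / 2 /\ d <= A /\ d <= a M - A) as [hd1 [hd2 hd3]].
      { unfold d; repeat split; [apply Rmin_l | |];
          (eapply Rle_trans; [apply Rmin_r | first [apply Rmin_l | apply Rmin_r]]). }
      exists (mkposreal d hd); simpl; intros u v hu hv; apply Rabs_lt_between' in hv.
      apply (Derive_hubble_sin_bound M); [exact hM | apply (hnear d); auto | lra].
  - apply (continuity_2d_pt_ext_loc (fun u v => sin v * dhubble_at (u * sin v))).
    + set (d := Rmin t (Rmin A (a M - A))).
      assert (hd : 0 < d) by (unfold d; repeat apply Rmin_glb_lt; lra).
      assert (d <= t /\ d <= A /\ d <= a M - A) as [hd1 [hd2 hd3]].
      { unfold d; repeat split; [apply Rmin_l | |];
          (eapply Rle_trans; [apply Rmin_r | first [apply Rmin_l | apply Rmin_r]]). }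
      exists (mkposreal d hd); simpl; intros u v hu hv; apply Rabs_lt_between' in hv.
      symmetry; apply is_derive_unique, (is_derive_hubble_sin M);
        [exact hM | apply (hnear d); auto | apply sin_gt_0; lra].
    + apply continuity_2d_pt_mult;
        [apply (continuity_1d_2d_pt_comp sin (fun u v => v));
           [apply continuity_sin | apply continuity_2d_pt_id2]|].
      apply continuity_2d_pt_mul_sin, continuity_pt_filterlim, (continuous_dhubble_at M);
        [exact hM|]; apply mul_sin_range; [lra | apply sin_gt_0; lra].
Qed.

Lemma is_derive_rho_scale M A : 0 <= M -> 0 < A < a M ->
  is_derive rho_scale A (RInt (dhubble_sin A) 0 (PI / 2)).
Proof.
  intros hM hA; assert (hpi := PI2_1).
  assert (hnear : locally A (fun u => 0 < u < a M)).
  { apply (locally_R A (Rmin A (a M - A))); [apply Rmin_glb_lt; lra|].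
    intros y hy; apply Rabs_lt_between' in hy.
    assert (Rmin A (a M - A) <= A) by apply Rmin_l.
    assert (Rmin A (a M - A) <= a M - A) by apply Rmin_r; lra. }
  assert (H := is_derive_RInt_param (fun u th => hubble_sin u th) 0 (PI / 2) A).
  rewrite Rmin_left, Rmax_right in H by lra.
  replace (RInt (dhubble_sin A) 0 (PI / 2))
    with (RInt (fun t => Derive (fun u => hubble_sin u t) A) 0 (PI / 2)); [apply H|].
  - revert hnear; apply filter_imp; intros y hy t ht.
    destruct (sin_ge_0 t ltac:(lra) ltac:(lra)) as [hs | hs].
    + eexists; apply (is_derive_hubble_sin M); auto.
    + eexists; apply is_derive_hubble_sin_nonpos; lra.
  - intros t ht; apply (continuity_2d_Derive_hubble_sin M); auto.
  - revert hnear; apply filter_imp; intros y hy.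
    apply ex_RInt_continuous_R; intros z _; apply (continuous_hubble_sin M); lra.
  - apply RInt_ext; rewrite Rmin_left, Rmax_right by lra; intros t ht.
    apply is_derive_unique, (is_derive_hubble_sin M); auto; apply sin_gt_0; lra.
Qed.

Definition f_angular A th := A * (1 - cos th) * curv_at (A * sin th).
Definition angular_primitive A th := (1 - cos th) / Derive a (ainv (A * sin th)).

Lemma f_angular_bound M A th : 0 <= M -> 0 < A < a M -> 0 < sin th -> 0 <= cos th ->
  Rabs (f_angular A th) <= K / A * hubble_sin A th.
Proof.
  intros hM hA hs hc; assert (hr := mul_sin_range (a M) A th hA hs).
  assert (hb := curv_at_bound M (A * sin th) hM ltac:(lra)).
  assert (hcos := one_sub_cos_le_sin_sq th hc).
  rewrite Rabs_mult, Rabs_mult, (Rabs_pos_eq (A * sin th)) in hb by lra.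
  unfold f_angular; rewrite Rabs_mult, (Rabs_pos_eq (A * (1 - cos th)))
    by (apply Rmult_le_pos; lra).
  set (cv := Rabs (curv_at (A * sin th))) in *.
  assert (hcv : 0 <= cv) by apply Rabs_pos.
  apply (Rmult_le_reg_l A); [lra|].
  replace (A * (K / A * hubble_sin A th)) with (K * hubble_sin A th) by (field; lra).
  apply (Rle_trans _ (A * sin th * (A * sin th) * cv)); [|exact hb].
  replace (A * sin th * (A * sin th) * cv) with (A * (A * sin th ^ 2 * cv)) by ring.
  apply Rmult_le_compat_l; [lra|]; apply Rmult_le_compat_r; [exact hcv|].
  apply Rmult_le_compat_l; lra.
Qed.

Lemma angular_primitive_bounds M A th : 0 <= M -> 0 < A < a M -> 0 < sin th -> 0 <= cos th ->
  0 <= angular_primitive A th <= / A * hubble_sin A th.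
Proof.
  intros hM hA hs hc; assert (hr := mul_sin_range (a M) A th hA hs).
  assert (hcos := one_sub_cos_le_sin_sq th hc); assert (sin th <= 1) by apply SIN_bound.
  assert (hd : 0 < Derive a (ainv (A * sin th))) by (apply da_pos, (ainv_pos M); lra).
  unfold angular_primitive, hubble_sin; rewrite (hubble_at_eq M) by lra.
  replace (/ A * (A * sin th / Derive a (ainv (A * sin th))))
    with (sin th / Derive a (ainv (A * sin th))) by (field; lra).
  split; [apply Rdiv_le_0_compat; lra|].
  apply Rmult_le_compat_r; [left; apply Rinv_0_lt_compat, hd|]; simpl in hcos; nra.
Qed.

(* The integration by parts: the two summands are the integrands of the
   [A]-derivative of [rho_scale] and of the angular form of [f(tau, 0)]. *)
Lemma is_derive_angular_primitive M A th : 0 <= M -> 0 < A < a M -> 0 < sin th ->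
  is_derive (angular_primitive A) th (dhubble_sin A th + f_angular A th).
Proof.
  intros hM hA hs; assert (hr := mul_sin_range (a M) A th hA hs).
  set (u := A * sin th) in *; set (T := ainv u).
  assert (hT : 0 < T) by (apply (ainv_pos M); lra).
  assert (haT : a T = u) by (apply (a_ainv M); lra).
  assert (hD : 0 < Derive a T) by auto.
  assert (h1 : is_derive (fun th => A * sin th) th (A * cos th)) by (auto_derive; auto; ring).
  assert (h2 := is_derive_comp ainv (fun th => A * sin th) th _ _
    (is_derive_ainv M u hM ltac:(lra)) h1).
  assert (h3 : is_derive (Derive a) T (Derive_n a 2 T)).
  { destruct (da_derivable T hT) as [l hl].
    change (Derive_n a 2 T) with (Derive (Derive a) T); rewrite (is_derive_unique _ _ _ hl).
    exact hl. }
  assert (h4 := is_derive_comp (Derive a) (fun th => ainv (A * sin th)) th _ _ h3 h2).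
  assert (h5 : is_derive (fun th => 1 - cos th) th (sin th)) by (auto_derive; auto; ring).
  assert (h6 := is_derive_div _ _ th _ _ h5 h4 ltac:(simpl; fold u T; lra)).
  unfold angular_primitive; apply (is_derive_ext _ _ _ _ (fun _ => eq_refl)) in h6.
  replace (dhubble_sin A th + f_angular A th) with
    ((sin th * Derive a (ainv (A * sin th)) -
      (1 - cos th) * scal (scal (A * cos th) (/ Derive a (ainv u))) (Derive_n a 2 T))
      / (Derive a (ainv (A * sin th)) ^ 2)); [exact h6|].
  unfold dhubble_sin, f_angular, dhubble_at, curv_at, accel_ratio, scal; simpl; unfold mult; simpl.
  fold u T; rewrite haT; assert (hsc := sin2_cos2 th); unfold Rsqr in hsc; unfold u.
  field_simplify_eq; [|lra].
  replace (sin th ^ 2) with (1 - cos th ^ 2) by (simpl; lra); ring.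
Qed.

Lemma continuous_angular M A (c g : R -> R) C th : 0 <= M -> 0 < A < a M -> - PI < th < PI ->
  (forall t, continuous c t) -> c 0 = 0 ->
  (forall u, 0 < u < a M -> continuous g u) -> (forall u, u <= 0 -> g u = g 0) ->
  (forall t, 0 < t < 1 -> Rabs (c t * g (A * sin t)) <= C * hubble_sin A t) ->
  continuous (fun t => c t * g (A * sin t)) th.
Proof.
  intros hM hA hth hc hc0 hg hg0 hb; assert (hpi := PI2_1).
  assert (hneg : forall t, sin t < 0 -> g (A * sin t) = g 0).
  { intros t ht; apply hg0; assert (0 <= A * - sin t) by (apply Rmult_le_pos; lra); lra. }
  destruct (Rtotal_order th 0) as [h | [-> | h]].
  - apply (continuous_ext_loc _ (fun t => c t * g 0));
      [|apply continuous_Rmult; [apply hc | apply continuous_const]].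
    generalize (locally_sin_neg th ltac:(apply sin_lt_0_var; lra)).
    apply filter_imp; intros t ht; rewrite hneg; auto.
  - apply (continuous_0_glue _ (fun t => c t * g 0) (fun t => C * hubble_sin A t)).
    + apply continuous_Rmult; [apply hc | apply continuous_const].
    + apply continuous_Rmult; [apply continuous_const | apply (continuous_hubble_sin M); lra].
    + rewrite sin_0, Rmult_0_r; reflexivity.
    + rewrite hc0; ring.
    + unfold hubble_sin; rewrite sin_0, Rmult_0_r, hubble_at_nonpos; lra.
    + apply (locally_R 0 1); [lra|]; intros y hy hy0; apply Rabs_lt_between' in hy.
      rewrite hneg; [reflexivity | apply sin_lt_0_var; lra].
    + apply (locally_R 0 1); [lra|]; intros y hy hy0; apply Rabs_lt_between' in hy.
      apply hb; lra.
  - apply continuous_Rmult; [apply hc|].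
    apply (continuous_Rcomp (fun t => A * sin t) g);
      [apply continuous_Rmult; [apply continuous_const | apply continuous_sin]|].
    apply hg, mul_sin_range; [lra | apply sin_gt_0; lra].
Qed.

Lemma continuous_dhubble_sin M A th : 0 <= M -> 0 < A < a M -> - PI < th < PI ->
  continuous (dhubble_sin A) th.
Proof.
  intros hM hA hth; apply (continuous_angular M A sin dhubble_at ((1 + K) / A)); auto.
  - apply continuous_sin.
  - apply sin_0.
  - intros u hu; apply (continuous_dhubble_at M); auto.
  - apply dhubble_at_nonpos.
  - intros t ht; apply (dhubble_sin_bound M); auto; apply sin_gt_0; assert (h := PI2_1); lra.
Qed.

Lemma continuous_f_angular M A th : 0 <= M -> 0 < A < a M -> - PI < th < PI ->
  continuous (f_angular A) th.
Proof.
  intros hM hA hth; assert (hpi := PI2_1).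
  apply (continuous_angular M A (fun t => A * (1 - cos t)) curv_at (K / A)); auto.
  - intro t; apply continuous_Rmult; [apply continuous_const|].
    apply continuous_Rminus; [apply continuous_const | apply continuous_cos].
  - rewrite cos_0; ring.
  - intros u hu; apply (continuous_curv_at M); auto.
  - apply curv_at_nonpos.
  - intros t ht; apply (f_angular_bound M); auto; [apply sin_gt_0 | apply cos_ge_0]; lra.
Qed.

Lemma angular_primitive_at_right_0 M A : 0 <= M -> 0 < A < a M ->
  filterlim (angular_primitive A) (at_right 0) (locally 0).
Proof.
  intros hM hA; assert (hpi := PI2_1).
  apply (filterlim_squeeze_0 _ _ (fun th => / A * hubble_sin A th)).
  - apply (locally_R 0 1); [lra|]; intros y hy hy0; apply Rabs_lt_between' in hy.
    destruct (angular_primitive_bounds M A y) as [h1 h2]; auto;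
      [apply sin_gt_0 | apply cos_ge_0 |]; try lra.
    rewrite Rabs_pos_eq; lra.
  - assert (hc : continuous (fun th => / A * hubble_sin A th) 0).
    { apply continuous_Rmult; [apply continuous_const | apply (continuous_hubble_sin M); lra]. }
    assert (H : filterlim (fun th => / A * hubble_sin A th) (at_right 0)
                  (locally (/ A * hubble_sin A 0))).
    { exact (continuous_within _ _ _ hc). }
    replace (/ A * hubble_sin A 0) with 0 in H; [exact H|].
    unfold hubble_sin; rewrite sin_0, Rmult_0_r, hubble_at_nonpos; lra.
Qed.

Lemma RInt_dhubble_sin_f_angular M A : 0 <= M -> 0 < A < a M ->
  RInt (dhubble_sin A) 0 (PI / 2) + RInt (f_angular A) 0 (PI / 2) = / Derive a (ainv A).
Proof.
  intros hM hA; assert (hpi := PI2_1).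
  assert (hd : 0 < Derive a (ainv A)) by (apply da_pos, (ainv_pos M); lra).
  assert (hc1 : forall th, - PI < th < PI -> continuous (dhubble_sin A) th)
    by (intros; apply (continuous_dhubble_sin M); auto).
  assert (hc2 : forall th, - PI < th < PI -> continuous (f_angular A) th)
    by (intros; apply (continuous_f_angular M); auto).
  rewrite <- (is_RInt_unique_R (fun th => dhubble_sin A th + f_angular A th) 0 (PI / 2)
    (RInt (dhubble_sin A) 0 (PI / 2) + RInt (f_angular A) 0 (PI / 2))).
  2: { apply (is_RInt_plus (dhubble_sin A) (f_angular A)); apply RInt_correct_R;
       apply (ex_RInt_continuous_on _ (- PI) PI); auto; lra. }
  rewrite (RInt_primitive_at_right _ (angular_primitive A) (- PI) 0 (PI / 2) 0); try lra.
  - unfold angular_primitive; rewrite cos_PI2, sin_PI2, Rmult_1_r; field; lra.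
  - intros z hz; apply continuous_Rplus; [apply hc1 | apply hc2]; lra.
  - intros z hz; apply (is_derive_angular_primitive M); auto; apply sin_gt_0; lra.
  - apply (angular_primitive_at_right_0 M A hM hA).
Qed.

(** * The substitution [a(t) = a(tau) sin th] *)

Section FixedTime.

Variable tau : R.
Hypothesis tau_pos : 0 < tau.

Lemma a_tau_bounds : 0 < a tau < a (tau + 1).
Proof. split; [apply a_pos | apply a_incr]; lra. Qed.

Definition angle t := asin (a t / a tau).
Definition time_of_angle th := ainv (a tau * sin th).
Definition dtime_of_angle th := a tau * cos th / Derive a (time_of_angle th).

Lemma angle_spec t : 0 <= t <= tau -> 0 <= angle t <= PI / 2 /\ sin (angle t) = a t / a tau.
Proof.
  intro ht; assert (hA := a_tau_bounds).
  assert (h1 : 0 <= a t / a tau <= 1).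
  { split; [apply Rdiv_le_0_compat; [apply a_ge0 | lra]|].
    apply (Rmult_le_reg_r (a tau)); [lra|]; unfold Rdiv.
    rewrite Rmult_assoc, Rinv_l, Rmult_1_r, Rmult_1_l by lra; apply a_le; lra. }
  assert (hb := asin_bound (a t / a tau)); fold (angle t) in hb.
  assert (hs : sin (angle t) = a t / a tau) by (apply sin_asin; lra).
  split; [|exact hs]; split; [|lra].
  apply Rnot_lt_le; intro h; assert (sin (angle t) < 0) by (apply sin_lt_0_var; lra); lra.
Qed.

Lemma angle_strict t : 0 < t < tau -> 0 < angle t < PI / 2.
Proof.
  intro ht; destruct (angle_spec t ltac:(lra)) as [[h1 h2] hs].
  assert (hA := a_tau_bounds).
  assert (hat : 0 < a t < a tau) by (split; [apply a_pos | apply a_incr]; lra).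
  assert (0 < a t / a tau < 1).
  { split; [apply Rdiv_lt_0_compat; lra|].
    apply (Rmult_lt_reg_r (a tau)); [lra|]; unfold Rdiv.
    rewrite Rmult_assoc, Rinv_l by lra; lra. }
  split.
  - destruct h1 as [h1 | h1]; [exact h1|]; rewrite <- h1, sin_0 in hs; lra.
  - destruct h2 as [h2 | h2]; [exact h2|]; rewrite h2, sin_PI2 in hs; lra.
Qed.

Lemma angle_0 : angle 0 = 0.
Proof. unfold angle; rewrite a_0; unfold Rdiv; rewrite Rmult_0_l; apply asin_0. Qed.

Lemma angle_tau : angle tau = PI / 2.
Proof.
  assert (hA := a_tau_bounds); unfold angle; rewrite Rdiv_diag by lra; apply asin_1.
Qed.

Lemma angle_le x y : 0 <= x <= y -> y <= tau -> angle x <= angle y.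
Proof.
  intros hxy hy; assert (hA := a_tau_bounds).
  destruct (angle_spec x ltac:(lra)) as [hx sx]; destruct (angle_spec y ltac:(lra)) as [hy' sy].
  apply sin_incr_0; try lra; rewrite sx, sy.
  apply Rmult_le_compat_r; [left; apply Rinv_0_lt_compat; lra | apply a_le; lra].
Qed.

Lemma continuous_angle t : continuous angle t.
Proof.
  assert (hA := a_tau_bounds).
  apply (continuous_Rcomp (fun t => a t / a tau) asin); [|apply continuous_asin].
  apply continuous_Rdiv; [apply a_cont | apply continuous_const | lra].
Qed.

Lemma time_of_angle_between x y th : 0 <= x <= y -> y <= tau -> angle x <= th <= angle y ->
  x <= time_of_angle th <= y.
Proof.
  intros hxy hy hth; assert (hA := a_tau_bounds).
  destruct (angle_spec x ltac:(lra)) as [hx sx]; destruct (angle_spec y ltac:(lra)) as [hy' sy].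
  assert (s1 : sin (angle x) <= sin th) by (apply sin_incr_1; lra).
  assert (s2 : sin th <= sin (angle y)) by (apply sin_incr_1; lra).
  assert (e1 : a x <= a tau * sin th).
  { replace (a x) with (a tau * (a x / a tau)) by (field; lra); apply Rmult_le_compat_l; lra. }
  assert (e2 : a tau * sin th <= a y).
  { replace (a y) with (a tau * (a y / a tau)) by (field; lra); apply Rmult_le_compat_l; lra. }
  assert (a y <= a tau) by (apply a_le; lra).
  unfold time_of_angle; rewrite <- (ainv_a x), <- (ainv_a y) by lra.
  split; apply (ainv_le tau); lra.
Qed.

Lemma time_of_angle_angle t : 0 <= t <= tau -> time_of_angle (angle t) = t.
Proof. intro ht; destruct (time_of_angle_between t t (angle t)); lra. Qed.

Lemma is_derive_time_of_angle th : 0 < sin th -> is_derive time_of_angle th (dtime_of_angle th).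
Proof.
  intro hs; assert (hA := a_tau_bounds).
  assert (hr := mul_sin_range (a (tau + 1)) (a tau) th hA hs).
  assert (H := is_derive_comp ainv (fun th => a tau * sin th) th _ (a tau * cos th)
    (is_derive_ainv (tau + 1) (a tau * sin th) ltac:(lra) hr)).
  unfold time_of_angle, dtime_of_angle.
  replace (a tau * cos th / Derive a (ainv (a tau * sin th)))
    with (scal (a tau * cos th) (/ Derive a (ainv (a tau * sin th))))
    by (unfold scal; simpl; unfold mult; simpl; unfold Rdiv; ring).
  apply H; auto_derive; auto; ring.
Qed.

Lemma continuous_dtime_of_angle th : 0 < sin th -> continuous dtime_of_angle th.
Proof.
  intro hs; assert (hA := a_tau_bounds).
  assert (hr := mul_sin_range (a (tau + 1)) (a tau) th hA hs).
  assert (hb : 0 < time_of_angle th) by (apply (ainv_pos (tau + 1)); lra).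
  apply continuous_Rdiv.
  - apply continuous_Rmult; [apply continuous_const | apply continuous_cos].
  - apply (continuous_Rcomp time_of_angle (Derive a)); [|apply continuous_da, hb].
    apply (continuous_Rcomp (fun th => a tau * sin th) ainv);
      [apply continuous_Rmult; [apply continuous_const | apply continuous_sin]|].
    apply (ainv_continuous (tau + 1)); lra.
  - apply Rgt_not_eq, da_pos, hb.
Qed.

Lemma is_RInt_angle (f psi : R -> R) x y : 0 < x <= y -> y < tau ->
  (forall t, x <= t <= y -> continuous f t) ->
  (forall th, 0 < th < PI / 2 -> psi th = dtime_of_angle th * f (time_of_angle th)) ->
  is_RInt f x y (RInt psi (angle x) (angle y)).
Proof.
  intros hxy hy hf hpsi.
  assert (hx1 := angle_strict x ltac:(lra)); assert (hy1 := angle_strict y ltac:(lra)).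
  assert (hle := angle_le x y ltac:(lra) ltac:(lra)).
  assert (hsin : forall th, angle x <= th <= angle y -> 0 < sin th)
    by (intros; apply sin_gt_0; lra).
  assert (H := is_RInt_comp f time_of_angle dtime_of_angle (angle x) (angle y)).
  rewrite Rmin_left, Rmax_right in H by lra.
  rewrite !time_of_angle_angle in H by lra.
  replace (RInt psi (angle x) (angle y)) with (RInt f x y).
  - apply RInt_correct_R, ex_RInt_continuous_R; intros z hz.
    rewrite Rmin_left, Rmax_right in hz by lra; apply hf, hz.
  - symmetry; apply is_RInt_unique_R.
    apply (is_RInt_ext (fun th => scal (dtime_of_angle th) (f (time_of_angle th))));
      [rewrite Rmin_left, Rmax_right by lra; intros th hth; symmetry; apply hpsi; lra|].
    apply H.
    + intros th hth; apply hf, time_of_angle_between; lra.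
    + intros th hth; split; [apply is_derive_time_of_angle | apply continuous_dtime_of_angle];
        apply hsin, hth.
Qed.

Definition rho_integrand t := a t / sqrt (a tau ^ 2 - a t ^ 2).
Definition f_integrand t := Derive_n a 2 t / Derive a t ^ 2 *
  (sqrt (a tau ^ 2 - a 0 ^ 2) / sqrt (a tau ^ 2 - a t ^ 2) - 1).

Lemma sqrt_a_tau_pos t : - tau < t < tau -> 0 < sqrt (a tau ^ 2 - a t ^ 2).
Proof.
  intro ht; apply sqrt_lt_R0.
  assert (a t < a tau)
    by (apply a_lt_Rabs; rewrite (Rabs_pos_eq tau) by lra; apply Rabs_def1; lra).
  assert (h0 := a_ge0 t); nra.
Qed.

Lemma continuous_rho_integrand t : - tau < t < tau -> continuous rho_integrand t.
Proof.
  intro ht; apply continuous_Rdiv; [apply a_cont | | apply Rgt_not_eq, sqrt_a_tau_pos, ht].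
  apply continuous_sqrt_comp, continuous_Rminus; [apply continuous_const|].
  apply continuous_Rpow, a_cont.
Qed.

Lemma ex_RInt_rho_integrand x y : - tau < x < tau -> - tau < y < tau -> ex_RInt rho_integrand x y.
Proof. apply ex_RInt_continuous_on, continuous_rho_integrand. Qed.

Lemma rho_integrand_pos t : - tau < t < tau -> t <> 0 -> 0 < rho_integrand t.
Proof. intros ht h0; apply Rdiv_lt_0_compat; [apply a_pos, h0 | apply sqrt_a_tau_pos, ht]. Qed.

Lemma continuous_f_integrand t : 0 < t < tau -> continuous f_integrand t.
Proof.
  intro ht; apply continuous_Rmult.
  - apply continuous_Rdiv; [apply dda_cont; lra | apply continuous_Rpow, continuous_da; lra|].
    apply pow_nonzero, Rgt_not_eq, da_pos; lra.
  - apply continuous_Rminus; [|apply continuous_const].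
    apply continuous_Rdiv; [apply continuous_const | | apply Rgt_not_eq, sqrt_a_tau_pos; lra].
    apply continuous_sqrt_comp, continuous_Rminus; [apply continuous_const|].
    apply continuous_Rpow, a_cont.
Qed.

Lemma time_of_angle_facts th : 0 < th < PI / 2 ->
  0 < time_of_angle th /\ a (time_of_angle th) = a tau * sin th /\ 0 < cos th /\ 0 < sin th.
Proof.
  intro hth; assert (hA := a_tau_bounds).
  assert (hs : 0 < sin th) by (apply sin_gt_0; assert (h := PI2_1); lra).
  assert (hc : 0 < cos th) by (apply cos_gt_0; lra).
  assert (hr := mul_sin_range (a (tau + 1)) (a tau) th hA hs).
  split; [apply (ainv_pos (tau + 1)); lra | split; [apply (a_ainv (tau + 1)); lra | auto]].
Qed.

Lemma hubble_sin_angle th : 0 < th < PI / 2 ->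
  hubble_sin (a tau) th = dtime_of_angle th * rho_integrand (time_of_angle th).
Proof.
  intro hth; destruct (time_of_angle_facts th hth) as [h1 [h2 [h3 h4]]].
  assert (hA := a_tau_bounds); assert (hD := da_pos _ h1).
  unfold hubble_sin, hubble_at, hubble_time, dtime_of_angle, rho_integrand.
  fold (time_of_angle th); rewrite h2, sqrt_sq_sub_sq_sin by lra.
  assert (a tau * cos th <> 0) by (apply Rgt_not_eq, Rmult_lt_0_compat; lra).
  field; lra.
Qed.

Lemma f_angular_angle th : 0 < th < PI / 2 ->
  f_angular (a tau) th = dtime_of_angle th * f_integrand (time_of_angle th).
Proof.
  intro hth; destruct (time_of_angle_facts th hth) as [h1 [h2 [h3 h4]]].
  assert (hA := a_tau_bounds); assert (hD := da_pos _ h1).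
  unfold f_angular, curv_at, dtime_of_angle, f_integrand.
  fold (time_of_angle th); rewrite h2, sqrt_sq_sub_sq_sin, a_0 by lra.
  replace (a tau ^ 2 - 0 ^ 2) with (a tau ^ 2) by ring; rewrite sqrt_pow2 by lra.
  assert (a tau * cos th <> 0) by (apply Rgt_not_eq, Rmult_lt_0_compat; lra).
  field; lra.
Qed.

Lemma continuous_RInt_0_angle (psi : R -> R) y :
  (forall th, -1 < th < PI -> continuous psi th) -> 0 <= y <= tau ->
  continuous (fun z => RInt psi 0 (angle z)) y.
Proof.
  intros hpsi hy; assert (hpi := PI2_1); destruct (angle_spec y hy) as [hay _].
  apply (continuous_Rcomp angle (fun w => RInt psi 0 w)); [apply continuous_angle|].
  apply (continuous_RInt_1 psi 0 (angle y)), (locally_R _ (1 / 2)); [lra|].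
  intros w hw; apply Rabs_lt_between' in hw.
  apply RInt_correct_R, (ex_RInt_continuous_on _ (-1) PI); auto; lra.
Qed.

Lemma RInt_rho_integrand_angle y : 0 < y < tau ->
  RInt rho_integrand 0 y = RInt (hubble_sin (a tau)) 0 (angle y).
Proof.
  intro hy; assert (hA := a_tau_bounds).
  assert (hpsi : forall th, -1 < th < PI -> continuous (hubble_sin (a tau)) th)
    by (intros; apply (continuous_hubble_sin (tau + 1)); lra).
  assert (E : RInt rho_integrand 0 y =
    RInt (hubble_sin (a tau)) 0 (angle y) - RInt (hubble_sin (a tau)) 0 (angle 0)).
  2: { rewrite angle_0, RInt_point_R, Rminus_0_r in E; exact E. }
  apply (continuous_at_right_unique (fun x => RInt rho_integrand x y)
    (fun x => RInt (hubble_sin (a tau)) 0 (angle y) - RInt (hubble_sin (a tau)) 0 (angle x))).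
  - apply (continuous_RInt_2 rho_integrand 0 y), (locally_R 0 tau); [lra|].
    intros z hz; apply Rabs_lt_between' in hz; apply RInt_correct_R, ex_RInt_rho_integrand; lra.
  - apply continuous_Rminus; [apply continuous_const | apply continuous_RInt_0_angle; auto; lra].
  - apply (locally_R 0 y); [lra|]; intros x hx hx0; apply Rabs_lt_between' in hx.
    rewrite <- (RInt_Chasles_R _ 0 (angle x) (angle y)), Rplus_minus_l
      by (apply (ex_RInt_continuous_on _ (-1) PI); auto;
          assert (h := angle_strict x ltac:(lra)); assert (h' := angle_strict y ltac:(lra)); lra).
    apply is_RInt_unique_R, is_RInt_angle; try lra.
    + intros t ht; apply continuous_rho_integrand; lra.
    + apply hubble_sin_angle.
Qed.

Lemma is_RInt_gen_rho_integrand s : - tau < s < tau ->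
  is_RInt_gen rho_integrand (at_right s) (at_left tau)
    (rho_scale (a tau) - RInt rho_integrand 0 s).
Proof.
  intro hs; assert (hA := a_tau_bounds); assert (hpi := PI2_1).
  apply (is_RInt_gen_antiderivative _ (fun y => RInt rho_integrand 0 y)); [lra | | |].
  - intros x y hxy hy.
    rewrite <- (RInt_Chasles_R _ 0 x y), Rplus_minus_l by (apply ex_RInt_rho_integrand; lra).
    apply RInt_correct_R, ex_RInt_rho_integrand; lra.
  - apply continuous_within.
    apply (continuous_RInt_1 rho_integrand 0 s), (locally_R s (Rmin (s + tau) (tau - s)));
      [apply Rmin_glb_lt; lra|].
    intros z hz; apply Rabs_lt_between' in hz.
    assert (Rmin (s + tau) (tau - s) <= s + tau) by apply Rmin_l.
    assert (Rmin (s + tau) (tau - s) <= tau - s) by apply Rmin_r.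
    apply RInt_correct_R, ex_RInt_rho_integrand; lra.
  - apply (filterlim_ext_loc (fun y => RInt (hubble_sin (a tau)) 0 (angle y))).
    + apply (locally_R tau tau); [lra|]; intros z hz hz0; apply Rabs_lt_between' in hz.
      symmetry; apply RInt_rho_integrand_angle; lra.
    + unfold rho_scale; rewrite <- angle_tau.
      apply (continuous_within (fun y => RInt (hubble_sin (a tau)) 0 (angle y)) tau).
      apply continuous_RInt_0_angle; [|lra].
      intros; apply (continuous_hubble_sin (tau + 1)); lra.
Qed.

Lemma is_RInt_gen_f_integrand :
  is_RInt_gen f_integrand (at_right 0) (at_left tau) (RInt (f_angular (a tau)) 0 (PI / 2)).
Proof.
  assert (hA := a_tau_bounds); assert (hpi := PI2_1).
  assert (hc : forall th, -1 < th < PI -> continuous (f_angular (a tau)) th)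
    by (intros; apply (continuous_f_angular (tau + 1)); lra).
  set (G := fun y => RInt (f_angular (a tau)) 0 (angle y)).
  replace (RInt (f_angular (a tau)) 0 (PI / 2)) with (RInt (f_angular (a tau)) 0 (PI / 2) - G 0)
    by (unfold G; rewrite angle_0, RInt_point_R; ring).
  apply (is_RInt_gen_antiderivative _ G); [lra | | |].
  - intros x y hxy hy; unfold G.
    assert (hx1 := angle_strict x ltac:(lra)); assert (hy1 := angle_strict y ltac:(lra)).
    rewrite <- (RInt_Chasles_R _ 0 (angle x) (angle y)), Rplus_minus_l
      by (apply (ex_RInt_continuous_on _ (-1) PI); auto; lra).
    apply is_RInt_angle; try lra.
    + intros t ht; apply continuous_f_integrand; lra.
    + apply f_angular_angle.
  - apply (continuous_within G 0), continuous_RInt_0_angle; auto; lra.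
  - rewrite <- angle_tau.
    apply (continuous_within G tau), continuous_RInt_0_angle; auto; lra.
Qed.

Lemma rhoM_rho_scale : rhoM a tau = rho_scale (a tau).
Proof.
  unfold rhoM, impint; change (fun t => a t / sqrt (a tau ^ 2 - a t ^ 2)) with rho_integrand.
  rewrite (is_RInt_gen_unique_R _ _ _ _ (is_RInt_gen_rho_integrand 0 ltac:(lra))).
  rewrite RInt_point_R; ring.
Qed.

Lemma fpos_0_angular : fpos a tau 0 = RInt (f_angular (a tau)) 0 (PI / 2).
Proof.
  unfold fpos, impint.
  change (fun t => dda a t / da a t ^ 2 *
            (sqrt (a tau ^ 2 - a 0 ^ 2) / sqrt (a tau ^ 2 - a t ^ 2) - 1)) with f_integrand.
  apply is_RInt_gen_unique_R, is_RInt_gen_f_integrand.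
Qed.

Lemma rhoM_ge0 : 0 <= rhoM a tau.
Proof.
  assert (hA := a_tau_bounds); assert (hpi := PI2_1).
  rewrite rhoM_rho_scale; apply RInt_ge_0; [lra | |].
  - apply ex_RInt_continuous_R; intros; apply (continuous_hubble_sin (tau + 1)); lra.
  - intros th hth; apply (hubble_at_ge0 (tau + 1)); [lra|].
    assert (h := mul_sin_le (a tau) th ltac:(lra)); lra.
Qed.

(* The integrand of [rhoM] is positive away from [0], which makes the solution
   [0] of the equation defining [t0] unique. *)
Lemma t0_rhoM rho : Rabs rho = rhoM a tau -> t0 a tau rho = 0.
Proof.
  intro hr; unfold t0.
  set (P := fun s => - tau < s < tau /\
       Rabs rho = impint (fun t => a t / sqrt (a tau ^ 2 - a t ^ 2)) s tau).
  assert (HP : P (epsilon (inhabits 0) P)).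
  { apply epsilon_spec; exists 0; split; [lra | rewrite hr; reflexivity]. }
  set (s := epsilon (inhabits 0) P) in *; destruct HP as [hs heq].
  unfold impint in heq.
  change (fun t => a t / sqrt (a tau ^ 2 - a t ^ 2)) with rho_integrand in heq.
  rewrite (is_RInt_gen_unique_R _ _ _ _ (is_RInt_gen_rho_integrand s hs)), hr,
    rhoM_rho_scale in heq.
  assert (hpos : forall x y, - tau < x < y -> y < tau -> 0 <= x \/ y <= 0 ->
    0 < RInt rho_integrand x y).
  { intros x y hxy hy h0; apply RInt_gt_0; [lra | |].
    - intros z hz; apply rho_integrand_pos; lra.
    - intros z hz; apply continuous_rho_integrand; lra. }
  destruct (Rtotal_order s 0) as [h | [h | h]]; auto; exfalso.
  - assert (h1 := hpos s 0 ltac:(lra) ltac:(lra) ltac:(lra)).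
    assert (h2 := RInt_Chasles_R rho_integrand 0 s 0
      ltac:(apply ex_RInt_rho_integrand; lra) ltac:(apply ex_RInt_rho_integrand; lra)).
    rewrite RInt_point_R in h2; lra.
  - assert (h1 := hpos 0 s ltac:(lra) ltac:(lra) ltac:(lra)); lra.
Qed.

End FixedTime.

Lemma is_derive_rhoM tau : 0 < tau -> is_derive (rhoM a) tau (1 - Derive a tau * fpos a tau 0).
Proof.
  intro ht; assert (hA := a_tau_bounds tau ht).
  destruct (a_derivable tau ht) as [l hl].
  assert (hl0 : Derive a tau = l) by exact (is_derive_unique _ _ _ hl).
  assert (hlpos : 0 < l) by (rewrite <- hl0; apply da_pos, ht).
  assert (hI := RInt_dhubble_sin_f_angular (tau + 1) (a tau) ltac:(lra) hA).
  rewrite ainv_a, hl0 in hI by lra.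
  rewrite hl0, fpos_0_angular by exact ht.
  apply (is_derive_ext_loc (fun x => rho_scale (a x))).
  { apply (locally_R tau tau); [lra|]; intros y hy; apply Rabs_lt_between' in hy.
    symmetry; apply rhoM_rho_scale; lra. }
  replace (1 - l * RInt (f_angular (a tau)) 0 (PI / 2))
    with (scal l (RInt (dhubble_sin (a tau)) 0 (PI / 2))).
  - apply (is_derive_comp rho_scale a); [apply (is_derive_rho_scale (tau + 1)); lra | exact hl].
  - unfold scal; simpl; unfold mult; simpl.
    replace (RInt (dhubble_sin (a tau)) 0 (PI / 2))
      with (/ l - RInt (f_angular (a tau)) 0 (PI / 2)) by lra.
    field; lra.
Qed.

Lemma rhoM_lightlike tau : 0 < tau ->
  ex_derive (rhoM a) tau /\
  gtt a tau (rhoM a tau) + (Derive (rhoM a) tau) ^ 2 = 0 /\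
  gtt a tau (- rhoM a tau) + (Derive (fun s => - rhoM a s) tau) ^ 2 = 0.
Proof.
  intro ht; assert (H := is_derive_rhoM tau ht).
  assert (hn := rhoM_ge0 tau ht).
  assert (ht1 : t0 a tau (rhoM a tau) = 0) by (apply t0_rhoM; [exact ht | apply Rabs_pos_eq, hn]).
  assert (ht2 : t0 a tau (- rhoM a tau) = 0)
    by (apply t0_rhoM; [exact ht | rewrite Rabs_Ropp; apply Rabs_pos_eq, hn]).
  assert (hf : ffun a tau 0 = fpos a tau 0)
    by (unfold ffun; destruct Rle_dec; [reflexivity | lra]).
  split; [eexists; exact H|].
  unfold gtt, da; rewrite ht1, ht2, hf, Derive_opp, (is_derive_unique _ _ _ H); split; ring.
Qed.

End ScaleFactor.

Theorem theorem6p2 (a : R -> R)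
  (Heven : forall t, a (- t) = a t)
  (Hsreg : strongly_regular_scale_factor a)
  (Hcase :
     (filterlim (da a) (at_right 0) (locally 0) /\
      exists eps, 0 < eps /\ forall t, 0 < t < eps -> 0 <= dda a t)
     \/
     (exists L, 0 < L /\ filterlim (da a) (at_right 0) (locally L)))
  (H3 : forall t, 0 < t -> ex_derive (Derive_n a 2) t)
  (HC : exists C, 0 < C /\ forall t, 0 < t ->
          Rabs (ddda a t * a t ^ 2 / (da a t) ^ 3) <= C) :
  forall tau, 0 < tau ->
    ex_derive (rhoM a) tau /\
    gtt a tau (rhoM a tau) + (Derive (rhoM a) tau) ^ 2 = 0 /\
    gtt a tau (- rhoM a tau) + (Derive (fun s => - rhoM a s) tau) ^ 2 = 0.
Proof.
  destruct Hsreg as [[Ha0 [Hinc [Hcont [Hder Hr1]]]] [K [HK HKr]]].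
  assert (Hdpos : forall t, 0 < t -> 0 < Derive a t).
  { intros t ht; destruct (Hder t ht) as [[l hl] _].
    assert (0 <= l) by exact (is_derive_increasing_ge0 a t l Hinc ht hl).
    assert (da a t <> 0) by apply (Hr1 t ht).
    unfold da in *; rewrite (is_derive_unique _ _ _ hl) in *; lra. }
  apply (rhoM_lightlike a Ha0 Heven Hinc (continuous_even a Heven Hcont)) with (K := K);
    try (intros t ht; apply (Hder t ht)); auto.
  intros t ht; split; [apply HKr, ht | apply Hr1, ht].
Qed.
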